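(* Let $(X,P,o)$ be a generalized parametric metric space such that $P$ satisfies (P5) and $o$ is continuous. Then $(X,\tau_P)$ is first countable; more precisely, for each $x\in X$ the family $\{B(x,\tfrac1n,\tfrac1n): n\in\mathbb{N}\}$ is a local base at $x$.
   Context: A binary operation $o:[0,\infty)\times[0,\infty)\to[0,\infty)$ (written $\alpha\, o\, \beta$) is assumed to satisfy, for all $\alpha,\beta,\gamma\in[0,\infty)$: (a) $\alpha\, o\, 0=\alpha$; (b) $\alpha\le\beta\implies \alpha\, o\,\gamma\le\beta\, o\,\gamma$; (c) $\alpha\, o\,\gamma=\gamma\, o\,\alpha$; (d) $\alpha\, o\,(\beta\, o\,\gamma)=(\alpha\, o\,\beta)\, o\,\gamma$. It is continuous if whenever $\alpha_n\to\alpha$ and $\beta_n\to\beta$ in $[0,\infty)$ we have $\alpha_n\, o\,\beta_n\to\alpha\, o\,\beta$. A generalized parametric metric on a nonempty set $X$ is a function $P:X\times X\times(0,\infty)\to[0,\infty)$ such that: (P1) $P(a,b,t)=0$ for all $t>0$ if and only if $a=b$; (P2) $P(a,b,t)=P(b,a,t)$ for all $a,b\in X$, $t>0$; (P3) $P(a,b,s+t)\le P(a,x,s)\, o\, P(b,x,t)$ for all $s,t>0$ and $a,b,x\in X$. The triple $(X,P,o)$ is a generalized parametric metric space. Condition (P5): for all $a,b\in X$, the map $t\mapsto P(a,b,t)$ is continuous on $(0,\infty)$. Open ball: $B(a,\alpha,t)=\{b\in X: P(a,b,t)<\alpha\}$. $\tau_P$ is the topology consisting of all $A\subseteq X$ such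 that for every $a\in A$ there exist $\alpha>0,t>0$ with $B(a,\alpha,t)\subseteq A$. *)

From Stdlib Require Import Reals.
Open Scope R_scope.

(* The binary operation o : [0,oo) x [0,oo) -> [0,oo), represented as a
   function R -> R -> R whose axioms are only imposed on [0,oo). *)
Definition is_binop (o : R -> R -> R) : Prop :=
  (forall a b, 0 <= a -> 0 <= b -> 0 <= o a b) /\
  (forall a, 0 <= a -> o a 0 = a) /\
  (forall a b c, 0 <= a -> 0 <= b -> 0 <= c -> a <= b -> o a c <= o b c) /\
  (forall a c, 0 <= a -> 0 <= c -> o a c = o c a) /\
  (forall a b c, 0 <= a -> 0 <= b -> 0 <= c -> o a (o b c) = o (o a b) c).

Definition binop_continuous (o : R -> R -> R) : Prop :=
  forall (an bn : nat -> R) (a b : R),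
    (forall n, 0 <= an n) -> (forall n, 0 <= bn n) -> 0 <= a -> 0 <= b ->
    Un_cv an a -> Un_cv bn b -> Un_cv (fun n => o (an n) (bn n)) (o a b).

(* Generalized parametric metric P : X x X x (0,oo) -> [0,oo); the values of
   P at parameters t <= 0 are irrelevant. *)
Definition is_gen_param_metric {X : Type} (P : X -> X -> R -> R)
  (o : R -> R -> R) : Prop :=
  (forall a b t, 0 < t -> 0 <= P a b t) /\
  (forall a b, (forall t, 0 < t -> P a b t = 0) <-> a = b) /\
  (forall a b t, 0 < t -> P a b t = P b a t) /\
  (forall a b x s t, 0 < s -> 0 < t -> P a b (s + t) <= o (P a x s) (P b x t)).

Definition P5 {X : Type} (P : X -> X -> R -> R) : Prop :=
  forall a b t, 0 < t -> continuity_pt (P a b) t.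

Definition oball {X : Type} (P : X -> X -> R -> R) (a : X) (alpha t : R)
  : X -> Prop := fun b => P a b t < alpha.

Definition tauP_open {X : Type} (P : X -> X -> R -> R) (A : X -> Prop) : Prop :=
  forall a, A a -> exists alpha t, 0 < alpha /\ 0 < t /\
    (forall b, oball P a alpha t b -> A b).

Definition local_base {X : Type} (P : X -> X -> R -> R) (x : X)
  (F : nat -> X -> Prop) : Prop :=
  (forall n, tauP_open P (F n) /\ F n x) /\
  (forall U, tauP_open P U -> U x -> exists n, forall b, F n b -> U b).

Definition first_countable {X : Type} (P : X -> X -> R -> R) : Prop :=
  forall x, exists F : nat -> X -> Prop, local_base P x F.

From Stdlib Require Import Reals Lra Lia ZArith.
Open Scope R_scope.

(* Proof plan.  Write r_n = 1/(n+1).  We show that the balls B(x, r_n, r_n)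
   form a local base at x; first countability is then immediate.

   - P is antitone in its parameter: P(a,b,t) <= P(a,b,s) for s <= t, by
     (P3) with middle point b, since P(b,b,-) = 0 and alpha o 0 = alpha.
   - Every ball B(x, alpha, t) is tau_P-open: for b in it, (P5) lets us
     shrink t to t - s while keeping P(x,b,t-s) < alpha; continuity of o at
     (P(x,b,t-s), 0) gives g > 0 with P(x,b,t-s) o g < alpha, and then
     (P3) and monotonicity of o give B(b, g, s) inside B(x, alpha, t).
   - An open U containing x contains some B(x, alpha, t), and by
     antitonicity it contains B(x, r_n, r_n) as soon as r_n <= min alpha t. *)

Lemma inv_succ_pos (n : nat) : 0 < / INR (S n).
Proof. apply Rinv_0_lt_compat, lt_0_INR; lia. Qed.

Lemma inv_succ_eventually_lt (m : R) :
  0 < m -> exists N, forall n, (N <= n)%nat -> / INR (S n) < m.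
Proof.
  intros Hm. destruct (archimed (/ m)) as [Hup _].
  assert (Hinv : 0 < / m) by (apply Rinv_0_lt_compat; exact Hm).
  assert (Hpos : (0 < up (/ m))%Z) by (apply lt_0_IZR; lra).
  exists (Z.to_nat (up (/ m))). intros n Hn.
  assert (Hcast : INR (Z.to_nat (up (/ m))) = IZR (up (/ m))).
  { rewrite INR_IZR_INZ, Z2Nat.id; [reflexivity | lia]. }
  assert (Hlt : INR (Z.to_nat (up (/ m))) < INR (S n)) by (apply lt_INR; lia).
  rewrite <- (Rinv_inv m). apply Rinv_lt_contravar; [apply Rmult_lt_0_compat|]; lra.
Qed.

Lemma inv_succ_cv0 : Un_cv (fun n => / INR (S n)) 0.
Proof.
  intros eps Heps. destruct (inv_succ_eventually_lt eps Heps) as [N HN].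
  exists N. intros n Hn. unfold R_dist.
  rewrite Rminus_0_r, Rabs_pos_eq by (left; apply inv_succ_pos).
  apply HN; lia.
Qed.

Lemma const_cv (b : R) : Un_cv (fun _ => b) b.
Proof. intros eps Heps. exists O. intros. unfold R_dist. rewrite Rminus_diag, Rabs_R0. lra. Qed.

Lemma binop_right_small (o : R -> R -> R) (beta alpha : R) :
  is_binop o -> binop_continuous o -> 0 <= beta -> beta < alpha ->
  exists g, 0 < g /\ o beta g < alpha.
Proof.
  intros (_ & Hid & _) Hc Hbeta Hlt.
  assert (Hcv := Hc (fun _ => beta) (fun n => / INR (S n)) beta 0
                    (fun _ => Hbeta) (fun n => Rlt_le _ _ (inv_succ_pos n))
                    Hbeta (Rle_refl 0) (const_cv beta) inv_succ_cv0).
  rewrite Hid in Hcv by exact Hbeta.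
  destruct (Hcv (alpha - beta) ltac:(lra)) as [N HN].
  specialize (HN N (le_n N)). unfold R_dist in HN. apply Rabs_def2 in HN.
  exists (/ INR (S N)). split; [apply inv_succ_pos | lra].
Qed.

Lemma P5_shrink_param {X : Type} (P : X -> X -> R -> R) (x b : X) (alpha t : R) :
  P5 P -> 0 < t -> P x b t < alpha ->
  exists s, 0 < s < t /\ P x b (t - s) < alpha.
Proof.
  intros H5 Ht Hlt.
  destruct (H5 x b t Ht (alpha - P x b t) ltac:(lra)) as [del [Hdel Hcont]].
  set (s := Rmin (del / 2) (t / 2)).
  assert (Hs0 : 0 < s) by (unfold s; apply Rmin_glb_lt; lra).
  assert (Hs1 : s <= del / 2) by apply Rmin_l.
  assert (Hs2 : s <= t / 2) by apply Rmin_r.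
  exists s. split; [lra|].
  assert (Hclose : Rabs (P x b (t - s) - P x b t) < alpha - P x b t).
  { apply (Hcont (t - s)). split; [split; [exact I | lra]|].
    simpl. unfold R_dist. rewrite Rabs_left; lra. }
  apply Rabs_def2 in Hclose. lra.
Qed.

Section GenParamMetric.
Variables (X : Type) (P : X -> X -> R -> R) (o : R -> R -> R).
Hypotheses (Ho : is_binop o) (HP : is_gen_param_metric P o).

Lemma P_antitone (a b : X) (s t : R) : 0 < s -> s <= t -> P a b t <= P a b s.
Proof.
  intros Hs Hst. destruct Ho as (_ & Hid & _).
  destruct HP as (Hnn & Hzero & _ & Htri).
  destruct (Req_dec s t) as [<- | Hne]; [lra|].
  replace t with (s + (t - s)) by ring.
  assert (Hbb : P b b (t - s) = 0) by (apply (proj2 (Hzero b b)); auto; lra).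
  eapply Rle_trans; [apply (Htri a b b s (t - s)); lra|].
  rewrite Hbb, Hid; [lra | apply Hnn; lra].
Qed.

Lemma oball_open (x : X) (alpha t : R) :
  P5 P -> binop_continuous o -> 0 < t -> tauP_open P (oball P x alpha t).
Proof.
  intros H5 Hc Ht b Hb. unfold oball in Hb.
  pose proof Ho as (Hnno & _ & Hmono & Hcomm & _).
  pose proof HP as (Hnn & _ & Hsym & Htri).
  destruct (P5_shrink_param P x b alpha t H5 Ht Hb) as [s [Hs Hshrunk]].
  set (beta := P x b (t - s)) in *.
  assert (Hbeta : 0 <= beta) by (apply Hnn; lra).
  destruct (binop_right_small o beta alpha Ho Hc Hbeta Hshrunk) as [g [Hg Hog]].
  exists g, s. split; [exact Hg|]. split; [lra|].
  intros c Hc'. unfold oball in *.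
  assert (Hbc : 0 <= P b c s) by (apply Hnn; lra).
  (* P(x,c,t) <= beta o P(c,b,s) = beta o P(b,c,s) <= beta o g < alpha *)
  replace t with ((t - s) + s) by ring.
  eapply Rle_lt_trans; [apply (Htri x c b (t - s) s); lra|].
  fold beta. rewrite (Hsym c b s) by lra.
  rewrite (Hcomm beta) by lra.
  eapply Rle_lt_trans; [apply (Hmono _ g); lra|].
  rewrite <- (Hcomm beta g) by lra. exact Hog.
Qed.

Lemma oball_center (x : X) (alpha t : R) : 0 < alpha -> 0 < t -> oball P x alpha t x.
Proof.
  intros Hal Ht. unfold oball.
  destruct HP as (_ & Hzero & _).
  rewrite (proj2 (Hzero x x) eq_refl t Ht). exact Hal.
Qed.

Lemma oball_inv_succ_sub (x : X) (alpha t : R) : 0 < alpha -> 0 < t ->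
  exists N, forall b, oball P x (/ INR (S N)) (/ INR (S N)) b -> oball P x alpha t b.
Proof.
  intros Hal Ht.
  destruct (inv_succ_eventually_lt (Rmin alpha t) ltac:(apply Rmin_glb_lt; lra))
    as [N HN].
  specialize (HN N (le_n N)).
  pose proof (Rmin_l alpha t). pose proof (Rmin_r alpha t). pose proof (inv_succ_pos N).
  exists N. intros b Hb. unfold oball in *.
  eapply Rle_lt_trans; [apply (P_antitone x b (/ INR (S N)) t); lra | lra].
Qed.

Lemma inv_succ_balls_local_base (x : X) :
  P5 P -> binop_continuous o ->
  local_base P x (fun n => oball P x (/ INR (S n)) (/ INR (S n))).
Proof.
  intros H5 Hc. split.
  - intros n. split.
    + exact (oball_open x _ _ H5 Hc (inv_succ_pos n)).
    + exact (oball_center x _ _ (inv_succ_pos n) (inv_succ_pos n)).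
  - intros U HU Ux. destruct (HU x Ux) as (alpha & t & Hal & Ht & Hsub).
    destruct (oball_inv_succ_sub x alpha t Hal Ht) as [N HN].
    exists N. intros b Hb. apply Hsub, HN, Hb.
Qed.

End GenParamMetric.

Theorem mainTheorem12 (X : Type) (P : X -> X -> R -> R) (o : R -> R -> R) :
  is_binop o -> is_gen_param_metric P o -> P5 P -> binop_continuous o ->
  first_countable P /\
  (forall x : X,
     local_base P x (fun n => oball P x (/ INR (S n)) (/ INR (S n)))).
Proof.
  intros Ho HP H5 Hc.
  assert (Hbase := fun x => inv_succ_balls_local_base X P o Ho HP x H5 Hc).
  split; [intros x; eexists; apply Hbase | exact Hbase].
Qed.
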